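(* The connected subgraph arrangements of the following two graphs are not factored: (1) the almost path graph $A_{3,2}$ (the star with central vertex $2$ and leaves $1,3,4$); (2) the cycle graph $C_4$.
   Context: For a finite simple graph $G=(N,E)$ with $N=\{1,\dots,n\}$ and $I\subseteq N$, $G[I]$ denotes the induced subgraph on $I$, and $H_I=\ker\big(\sum_{i\in I}x_i\big)$, where $x_1,\dots,x_n$ are the coordinate functions. The connected subgraph arrangement of $G$ is $\mathcal{A}_G=\{H_I:\emptyset\neq I\subseteq N,\ G[I]\text{ connected}\}$ over $\mathbb{Q}$. $A_{3,2}$ has vertices $1,2,3,4$ and edges $\{1,2\},\{2,3\},\{2,4\}$; $C_4$ has vertices $1,2,3,4$ and edges $\{1,2\},\{2,3\},\{3,4\},\{1,4\}$. A partition $\pi=(\pi_1,\dots,\pi_s)$ of an arrangement $\mathcal{A}$ is nice if (i) for every choice $H_i\in\pi_i$ the $s$ defining forms are linearly independent, and (ii) for every $X\in L(\mathcal{A})\setminus\{V\}$ the induced partition of $\mathcal{A}_X=\{H\in\mathcal{A}:X\subseteq H\}$ into the nonempty sets $\pi_i\cap\mathcal{A}_X$ has a singleton block. $\mathcal{A}$ is factored if it admits a nice partition. *)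

From HB Require Import structures.
From mathcomp Require Import all_boot all_order all_algebra.
Set Implicit Arguments. Unset Strict Implicit. Unset Printing Implicit Defensive.
Import Order.TTheory GRing.Theory Num.Theory.
Local Open Scope ring_scope.

(* A finite simple graph on vertex set 'I_n (vertex k+1 of the paper is the
   ordinal k) is given by a symmetric irreflexive relation e. *)
Definition simple_graph (n : nat) (e : rel 'I_n) : Prop :=
  irreflexive e /\ symmetric e.

Definition induced_connected (n : nat) (e : rel 'I_n) (I : {set 'I_n}) : bool :=
  (I != set0) &&
  [forall x in I, forall y in I,
     connect [rel a b | [&& a \in I, b \in I & e a b]] x y].

Notation V n := 'rV[rat]_n.

(* defining form of H_I : sum_{i in I} x_i, as a row vector *)
Definition form (n : nat) (I : {set 'I_n}) : V n := \row_i (i \in I)%:R.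

Definition hyp (n : nat) (I : {set 'I_n}) : pred (V n) :=
  [pred v : V n | (\sum_(i in I) v ord0 i) == 0].

(* The connected subgraph arrangement, indexed by the subsets I labelling
   its hyperplanes H_I (the map I |-> H_I is injective). *)
Definition csa (n : nat) (e : rel 'I_n) : {set {set 'I_n}} :=
  [set I | induced_connected e I].

Definition flat (n : nat) (S : {set {set 'I_n}}) : pred (V n) :=
  [pred v : V n | [forall I in S, v \in hyp I]].

Definition in_loc (n : nat) (A S : {set {set 'I_n}}) (J : {set 'I_n}) : Prop :=
  J \in A /\ (forall v : V n, v \in flat S -> v \in hyp J).

Definition nice_partition (n : nat) (A : {set {set 'I_n}})
    (pi : {set {set {set 'I_n}}}) : Prop :=
  partition pi A /\
  (forall sel : {set {set 'I_n}} -> {set 'I_n},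
     (forall B, B \in pi -> sel B \in B) ->
     free [seq form (sel B) | B <- enum pi]) /\
  (* (ii) every X in L(A) \ {V} : induced partition of A_X has a singleton block *)
  (forall S : {set {set 'I_n}}, S \subset A ->
     (exists v : V n, v \notin flat S) ->
     exists2 B, B \in pi &
       exists J, [/\ J \in B, in_loc A S J &
                   forall K, K \in B -> in_loc A S K -> K = J]).

Definition factored (n : nat) (A : {set {set 'I_n}}) : Prop :=
  exists pi, nice_partition A pi.

Definition graph_of (n : nat) (E : seq (nat * nat)) : rel 'I_n :=
  [rel x y | ((val x, val y) \in E) || ((val y, val x) \in E)].

(* A_{3,2}: vertices 1..4 (= 0..3), edges {1,2},{2,3},{2,4} *)
Definition A32 : rel 'I_4 := @graph_of 4%N [:: (0,1); (1,2); (1,3)]%N.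
Definition C4 : rel 'I_4 := @graph_of 4%N [:: (0,1); (1,2); (2,3); (0,3)]%N.

From Pilot Require Import Defs.
From HB Require Import structures.
From mathcomp Require Import all_boot all_order all_algebra.
Set Implicit Arguments. Unset Strict Implicit. Unset Printing Implicit Defensive.
Import Order.TTheory GRing.Theory Num.Theory.

(* Condition (ii)
   at the rank-2 flat H_a ∩ H_b says that if H_a and H_b lie in one block, some
   other hyperplane containing H_a ∩ H_b lies in another block.  Condition (i)
   says that when a and b are disjoint, H_a, H_b and H_(a ∪ b) (whose forms
   satisfy x_(a ∪ b) = x_a + x_b) are not in three different blocks, and that
   there are at most four blocks.  For A_{3,2} and C_4 no labelling of the
   hyperplanes by four block labels meets these constraints; this is checked by
   an exhaustive search, with vertex subsets encoded as bitmasks and each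
   non-containment H_a ∩ H_b ⊄ H_c witnessed by a vector with entries in
   {-1, 0, 1}. *)

(* all_algebra exports a bilinear [form] that shadows [Defs.form]. *)
Local Notation form := Defs.form.
Local Open Scope ring_scope.

Lemma free_sub (K : fieldType) (vT : vectType K) (X Y : seq vT) :
  free X -> uniq Y -> {subset Y <= X} -> free Y.
Proof.
move=> freeX uniqY sYX.
have /perm_free <- : perm_eq (filter (mem Y) X) Y.
  apply: uniq_perm => //; first exact/filter_uniq/free_uniq.
  by move=> x; rewrite mem_filter andb_idr //; apply: sYX.
by move: freeX; rewrite -(perm_free (permEl (perm_filterC (mem Y) X))) => /catl_free.
Qed.

Lemma uniq_map_inj_in (T1 T2 : eqType) (f : T1 -> T2) (s : seq T1) :
  uniq (map f s) -> {in s &, injective f}.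
Proof.
elim: s => //= z s IH /andP [fz_s /IH inj_s] x y.
rewrite !inE => /predU1P [-> | xs] /predU1P [-> | ys] // Exy.
- by move: fz_s; rewrite Exy map_f.
- by move: fz_s; rewrite -Exy map_f.
- exact: inj_s.
Qed.

Lemma form_inj n : injective (@Defs.form n).
Proof.
move=> I J /rowP fIJ; apply/setP => i; have /eqP := fIJ i.
by rewrite !mxE eqr_nat; do 2 case: (_ \in _).
Qed.

Lemma form_notin_hyp n (I : {set 'I_n}) : I != set0 -> form I \notin hyp I.
Proof.
move=> I0; rewrite inE /=.
have -> : \sum_(i in I) form I ord0 i = #|I|%:R.
  by rewrite -sumr_const; apply: eq_bigr => i iI; rewrite mxE iI.
by rewrite pnatr_eq0 -lt0n card_gt0.
Qed.

Definition block_rep n (B : {set {set 'I_n}}) : {set 'I_n} := odflt set0 [pick J in B].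

Definition block_index n (pi : {set {set {set 'I_n}}}) (J : {set 'I_n}) : nat :=
  index (pblock pi J) (enum pi).

Section NicePartition.
Variables (n : nat) (A : {set {set 'I_n}}) (pi : {set {set {set 'I_n}}}).
Hypothesis nice : nice_partition A pi.

Let part : partition pi A := nice.1.
Let coverE : cover pi = A. Proof. by case/and3P: part => /eqP. Qed.

Lemma nice_pblock_mem J : J \in A -> pblock pi J \in pi.
Proof. by rewrite -coverE; apply: pblock_mem. Qed.

Lemma nice_mem_pblock J : J \in A -> J \in pblock pi J.
Proof. by rewrite mem_pblock coverE. Qed.

Lemma block_rep_mem B : B \in pi -> block_rep B \in B.
Proof.
move=> Bpi; rewrite /block_rep; case: pickP => [//|B0].
case/and3P: part => _ _ /negP []; suff <- : B = set0 by [].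
by apply/setP => J; rewrite B0 inE.
Qed.

Lemma nice_free (s : seq {set 'I_n}) :
  {subset s <= A} -> uniq (map (pblock pi) s) -> free [seq form J | J <- s].
Proof.
move=> sA uniq_bs; have inj_s := uniq_map_inj_in uniq_bs.
pose sel (B : {set {set 'I_n}}) : {set 'I_n} :=
  if [pick J | (J \in s) && (pblock pi J == B)] is Some J then J else block_rep B.
have selP B : B \in pi -> sel B \in B.
  move=> Bpi; rewrite /sel; case: pickP => [J /andP [Js /eqP <-] | _].
    exact/nice_mem_pblock/sA.
  exact: block_rep_mem.
have selK J : J \in s -> sel (pblock pi J) = J.
  move=> Js; rewrite /sel; case: pickP => [K /andP [Ks /eqP]|/(_ J)].
    exact: inj_s.
  by rewrite Js eqxx.
apply: free_sub (nice.2.1 sel selP) _ _.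
  by rewrite map_inj_uniq; [exact: map_uniq uniq_bs | exact: form_inj].
move=> _ /mapP [J Js ->]; rewrite -(selK J Js).
by apply: map_f; rewrite mem_enum nice_pblock_mem ?sA.
Qed.

Lemma nice_card_le : (#|pi| <= n)%N.
Proof.
have /eqP free_pi := nice.2.1 _ block_rep_mem.
rewrite cardE -(size_map (fun B => form (block_rep B))) -free_pi.
by rewrite (leq_trans (dimvS (subvf _))) // dimvf dim_matrix mul1r.
Qed.

Lemma nice_dependent_triple a b c :
  a \in A -> b \in A -> c \in A -> form c = form a + form b ->
  [|| pblock pi a == pblock pi b, pblock pi a == pblock pi c | pblock pi b == pblock pi c].
Proof.
move=> aA bA cA fc; apply/contraT; rewrite !negb_or => /and3P [ab ac bc].
have : free [seq form J | J <- [:: c; a; b]].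
  apply: nice_free; first by move=> J; rewrite !in_cons in_nil orbF => /or3P [] /eqP ->.
  rewrite !map_cons !cons_uniq !in_cons in_nil !orbF !negb_or.
  by rewrite !(eq_sym (pblock pi c)) ab ac bc.
rewrite !map_cons free_cons fc => /andP [/negP c_indep _]; exfalso; apply: c_indep.
apply: memvD; apply: memv_span; first exact: mem_head.
by rewrite in_cons mem_head orbT.
Qed.

Lemma nice_split a b :
  a \in A -> b \in A -> a != b -> a != set0 -> pblock pi a = pblock pi b ->
  exists2 J, J \in A /\ (forall v, v \in hyp a -> v \in hyp b -> v \in hyp J)
           & pblock pi J != pblock pi a.
Proof.
move=> aA bA ab a0 Eab.
have SA : [set a; b] \subset A by rewrite subUset !sub1set aA bA.
have flat_ab v : (v \in flat [set a; b]) = (v \in hyp a) && (v \in hyp b).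
  apply/forall_inP/andP => [H | [va vb] I]; first by split; apply: H; rewrite !inE eqxx ?orbT.
  by rewrite !inE => /orP [] /eqP ->.
have flat_proper : exists v, v \notin flat [set a; b].
  by exists (form a); rewrite flat_ab negb_and form_notin_hyp.
have [B Bpi [J [JB [JA J_loc] J_uniq]]] := nice.2.2 _ SA flat_proper.
have loc_ab K : K \in [set a; b] -> in_loc A [set a; b] K.
  move=> Kab; split; first exact: (subsetP SA).
  by move=> v /forall_inP; apply.
exists J; first by split=> // v va vb; apply: J_loc; rewrite flat_ab va.
have triv : trivIset pi by case/and3P: part.
rewrite (def_pblock triv Bpi JB); apply/eqP => EB; move/eqP: ab; apply.
have aJ : a = J by apply: J_uniq (loc_ab a _); rewrite ?EB ?nice_mem_pblock // !inE eqxx.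
have bJ : b = J.
  by apply: J_uniq (loc_ab b _); rewrite ?EB ?Eab ?nice_mem_pblock // !inE eqxx orbT.
by rewrite aJ bJ.
Qed.

Lemma block_index_lt J : J \in A -> (block_index pi J < n)%N.
Proof.
move=> JA; apply: leq_trans nice_card_le.
by rewrite cardE index_mem mem_enum nice_pblock_mem.
Qed.

Lemma eq_block_index J K : J \in A -> K \in A ->
  (block_index pi J == block_index pi K) = (pblock pi J == pblock pi K).
Proof.
move=> JA KA; rewrite /block_index; apply/eqP/eqP => [|-> //].
have enum_pblock L : L \in A -> pblock pi L \in enum pi.
  by move=> LA; rewrite mem_enum nice_pblock_mem.
by move=> E; rewrite -(nth_index set0 (enum_pblock J JA)) E nth_index ?enum_pblock.
Qed.

End NicePartition.

Section EqualityLabellings.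
Variable X : eqType.

(* [(true, x, y)] asks for equal labels of x and y, [(false, x, y)] for
   different ones; a clause is a disjunction of literals. *)
Definition literal := (bool * X * X)%type.

Definition lit_holds (f : X -> nat) (l : literal) : bool := (f l.1.2 == f l.2) == l.1.1.

Lemma lit_holdsE f b x y : lit_holds f (b, x, y) = ((f x == f y) == b).
Proof. by []. Qed.

Definition lit_closed (p : seq X) (l : literal) : bool := (l.1.2 \in p) && (l.2 \in p).

(* The clauses to check after labelling the next element of [todo]: those
   whose elements have all just become labelled. *)
Fixpoint buckets (cls : seq (seq literal)) (p todo : seq X) : seq (seq (seq literal)) :=
  if todo is x :: todo' then
    [seq cl <- cls | all (lit_closed (x :: p)) cl && ~~ all (lit_closed p) cl]
      :: buckets cls (x :: p) todo'
  else [::].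

(* [if] rather than [&&]: the VM evaluates both arguments of [&&], which would
   defeat the pruning. *)
Fixpoint extends (k : nat) (todo : seq X) (bks : seq (seq (seq literal))) (f : X -> nat) :
    bool :=
  if (todo, bks) is (x :: todo', bk :: bks') then
    has (fun c => let f' y := if y == x then c else f y in
                  if all (has (lit_holds f')) bk then extends k todo' bks' f' else false)
      (iota 0 k)
  else true.

Definition labelling_exists (k : nat) (cls : seq (seq literal)) (todo : seq X) : bool :=
  extends k todo (buckets cls [::] todo) (fun=> 0%N).

Lemma extends_complete k cls g p todo f :
  all (has (lit_holds g)) cls -> {in todo, forall x, g x < k}%N -> {in p, f =1 g} ->
  extends k todo (buckets cls p todo) f.
Proof.
move=> sat_g; elim: todo p f => [//|x todo IH] p f gk fg /=.
apply/hasP; exists (g x); first by rewrite mem_iota add0n gk ?mem_head.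
set f' := fun y => if y == x then g x else f y.
have f'g : {in x :: p, f' =1 g}.
  by move=> y; rewrite /f' inE; case: eqP => [-> | _ /fg].
rewrite ifT; first by apply: IH => // y yt; apply: gk; rewrite inE yt orbT.
apply/allP => cl; rewrite mem_filter => /andP [/andP [cl_closed _] cl_in].
have /hasP [l l_cl g_l] := allP sat_g cl cl_in; apply/hasP; exists l => //.
by case/andP: (allP cl_closed l l_cl) => l1 l2; rewrite /lit_holds !f'g.
Qed.

Lemma labelling_exists_complete k cls todo g :
  all (has (lit_holds g)) cls -> {in todo, forall x, g x < k}%N ->
  labelling_exists k cls todo.
Proof. by move=> sat_g gk; apply: (extends_complete sat_g gk). Qed.

End EqualityLabellings.

Definition bit (m i : nat) : bool := odd (m %/ 2 ^ i).

Definition mask_set (m : nat) : {set 'I_4} := [set i : 'I_4 | bit m i].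

Definition mask_of (J : {set 'I_4}) : nat := (\sum_(i < 4 | i \in J) 2 ^ i)%N.

Lemma mask_setK m : (m < 16)%N -> mask_of (mask_set m) = m.
Proof.
rewrite /mask_of big_mkcond !big_ord_recl big_ord0 !inE /=.
by do 16! case: m => [|m] //.
Qed.

Lemma mask_set_onto (J : {set 'I_4}) : exists2 m, (m < 16)%N & J = mask_set m.
Proof.
have inj : injective (fun m : 'I_16 => mask_set m).
  by move=> m m' /(congr1 mask_of); rewrite !mask_setK // => /val_inj.
have card16 : (#|{set 'I_4}| <= #|'I_16|)%N.
  by rewrite -cardsT -powersetT card_powerset cardsT !card_ord.
have /codomP [m ->] := inj_card_onto inj card16 J.
by exists m.
Qed.

Definition mask_sum (m : nat) (w : seq int) : int :=
  foldr (fun i s => (if bit m i then nth 0 w i else 0) + s) 0 (iota 0 4).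

Definition vec_of (w : seq int) : 'rV[rat]_4 := \row_i (nth 0 w i)%:~R.

Lemma mask_sumE m w : mask_sum m w = \sum_(i < 4 | bit m i) nth 0 w i.
Proof. by rewrite -big_mkord big_mkcond unlock. Qed.

Lemma hyp_vec_of m w : (vec_of w \in hyp (mask_set m)) = (mask_sum m w == 0).
Proof.
rewrite inE /= mask_sumE -(intr_eq0 rat) rmorph_sum /=.
by congr (_ == 0); apply: eq_big => i; rewrite ?inE ?mxE.
Qed.

Definition sign_vectors : seq (seq int) :=
  foldr (fun _ ws => [seq x :: w | x <- [:: -1; 0; 1], w <- ws]) [:: [::]] (iota 0 4).

Definition separates (a b c : nat) : bool :=
  has (fun w => [&& mask_sum a w == 0, mask_sum b w == 0 & mask_sum c w != 0]) sign_vectors.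

Lemma separatesP a b c :
  separates a b c ->
  exists2 v : 'rV[rat]_4, (v \in hyp (mask_set a)) && (v \in hyp (mask_set b))
                        & v \notin hyp (mask_set c).
Proof.
case/hasP => w _ /and3P [wa wb wc].
by exists (vec_of w); rewrite !hyp_vec_of ?wa ?wb.
Qed.

Definition mask_add (a b c : nat) : bool :=
  all (fun i => (bit c i == bit a i + bit b i :> nat)%N) (iota 0 4).

Lemma form_mask_add a b c :
  mask_add a b c -> form (mask_set c) = form (mask_set a) + form (mask_set b).
Proof.
move=> /allP abc; apply/rowP => i; rewrite !mxE !inE.
have i4 : val i \in iota 0 4 by rewrite mem_iota ltn_ord.
by rewrite (eqP (abc i i4)) natrD.
Qed.

Lemma graph_of_sym n (E : seq (nat * nat)) : symmetric (@graph_of n E).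
Proof. by move=> x y; rewrite /graph_of /= orbC. Qed.

Lemma induced_connected_center n (e : rel 'I_n) (I : {set 'I_n}) c :
  symmetric e -> c \in I ->
  (forall x, x \in I -> [|| x == c, e c x | [exists y in I, e c y && e y x]]) ->
  induced_connected e I.
Proof.
move=> sym_e cI near_c; set r := [rel x y | [&& x \in I, y \in I & e x y]].
have sym_r : connect_sym r.
  by apply: sym_connect_sym => x y /=; rewrite sym_e andbCA.
have c_to x : x \in I -> connect r c x.
  move=> xI; case/or3P: (near_c x xI) => [/eqP -> // | cx | /exists_inP [y yI /andP [cy yx]]].
    by apply: (@connect1 _ r); rewrite /= cI xI.
  have cy_r : r c y by rewrite /= cI yI.
  have yx_r : r y x by rewrite /= yI xI.
  exact: connect_trans (@connect1 _ r _ _ cy_r) (@connect1 _ r _ _ yx_r).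
apply/andP; split; first by apply/set0Pn; exists c.
apply/forall_inP => x xI; apply/forall_inP => y yI.
by apply: (@connect_trans _ _ c); [rewrite sym_r|]; apply: c_to.
Qed.

Lemma induced_disconnected n (e : rel 'I_n) (I : {set 'I_n}) x y :
  x \in I -> y \in I -> x != y -> (forall u v, u \in I -> v \in I -> ~~ e u v) ->
  ~~ induced_connected e I.
Proof.
move=> xI yI xy no_edge; rewrite negb_and; apply/orP; right.
apply/negP => /forall_inP /(_ x xI) /forall_inP /(_ y yI).
have closed_x : closed [rel u v | [&& u \in I, v \in I & e u v]] (pred1 x).
  by move=> u v /and3P [uI vI /negP]; rewrite (negbTE (no_edge u v uI vI)).
by move/(closed_connect closed_x); rewrite !inE eqxx eq_sym (negbTE xy).
Qed.

Lemma csa_neq0 n (e : rel 'I_n) J : J \in csa e -> J != set0.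
Proof. by rewrite inE => /andP []. Qed.

Definition adjacent (E : seq (nat * nat)) (x y : nat) : bool :=
  ((x, y) \in E) || ((y, x) \in E).

(* Certificate of connectivity: a vertex of the mask within distance two of
   every other vertex of the mask. *)
Definition mask_connected (E : seq (nat * nat)) (m : nat) : bool :=
  has (fun c => bit m c && all (fun x => bit m x ==> [|| x == c, adjacent E c x
         | has (fun y => [&& bit m y, adjacent E c y & adjacent E y x]) (iota 0 4)])
       (iota 0 4)) (iota 0 4).

Definition mask_disconnected (E : seq (nat * nat)) (m : nat) : bool :=
  (m == 0)%N ||
  [&& has (fun x => has (fun y => [&& x != y, bit m x & bit m y]) (iota 0 4)) (iota 0 4)
    & all (fun x => all (fun y => ~~ [&& bit m x, bit m y & adjacent E x y]) (iota 0 4))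
          (iota 0 4)].

Lemma mask_connected_csa E m : mask_connected E m -> mask_set m \in csa (graph_of E).
Proof.
case/hasP => c; rewrite mem_iota => /andP [_ c4] /andP [cm near_c]; rewrite inE.
apply: (induced_connected_center (c := Ordinal c4)); first exact: graph_of_sym.
  by rewrite inE.
move=> x; rewrite inE => xm.
have x4 : val x \in iota 0 4 by rewrite mem_iota ltn_ord.
have /or3P [/eqP xc | cx | /hasP [y]] := implyP (allP near_c x x4) xm.
- by apply/orP; left; apply/eqP/val_inj.
- by apply/or3P; apply: Or32.
rewrite mem_iota => /andP [_ y4] /and3P [ym cy yx].
apply/or3P; apply: Or33; apply/exists_inP; exists (Ordinal y4); first by rewrite inE.
exact/andP.
Qed.

Lemma mask_disconnected_csa E m :
  mask_disconnected E m -> mask_set m \notin csa (graph_of E).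
Proof.
rewrite inE; case/orP => [/eqP -> | /andP [/hasP [x x4 /hasP [y y4 /and3P [xy xm ym]]] no_edge]].
  rewrite /induced_connected negb_and negbK; apply/orP; left.
  by apply/eqP/setP => i; rewrite !inE /bit div0n.
move: x4 y4; rewrite !mem_iota => /andP [_ x4] /andP [_ y4].
apply: (@induced_disconnected _ _ _ (Ordinal x4) (Ordinal y4)); rewrite ?inE //.
move=> u v; rewrite !inE => um vm.
have u4 : val u \in iota 0 4 by rewrite mem_iota ltn_ord.
have v4 : val v \in iota 0 4 by rewrite mem_iota ltn_ord.
by have := allP (allP no_edge u u4) v v4; rewrite um vm.
Qed.

Definition csa_masks (E : seq (nat * nat)) : seq nat :=
  [seq m <- iota 0 16 | mask_connected E m].

Definition connectivity_decided (E : seq (nat * nat)) : bool :=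
  all (fun m => mask_connected E m || mask_disconnected E m) (iota 0 16).

(* Condition (ii) at H_a ∩ H_b: a hyperplane containing it is not separated
   from it by a sign vector. *)
Definition split_clause (hs : seq nat) (a b : nat) : seq (literal nat) :=
  (false, a, b) :: [seq (false, c, a) | c <- hs & ~~ separates a b c].

(* Condition (i) for x_(a + b) = x_a + x_b, when the masks a and b are disjoint. *)
Definition triple_clause (a b : nat) : seq (literal nat) :=
  [:: (true, a, b); (true, a, a + b); (true, b, a + b)]%N.

Definition clauses (hs : seq nat) : seq (seq (literal nat)) :=
  [seq split_clause hs a b | a <- hs, b <- [seq b <- hs | (a < b)%N]] ++
  [seq triple_clause a b
     | a <- hs, b <- [seq b <- hs | (a < b)%N && ((a + b)%N \in hs) && mask_add a b (a + b)]].

Section FourVertexGraph.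
Variable E : seq (nat * nat).
Hypothesis decided : connectivity_decided E.

Local Notation A := (csa (@graph_of 4 E)).

Lemma csa_masks_lt m : m \in csa_masks E -> (m < 16)%N.
Proof. by rewrite mem_filter mem_iota => /and3P []. Qed.

Lemma mem_csa_masks m : (m < 16)%N -> (mask_set m \in A) = (m \in csa_masks E).
Proof.
move=> m16; rewrite mem_filter mem_iota m16 andbT.
have [/mask_connected_csa -> // | not_conn] := boolP (mask_connected E m).
have := allP decided m; rewrite mem_iota m16 (negbTE not_conn) => /(_ isT).
by move/mask_disconnected_csa/negbTE.
Qed.

Lemma mask_set_csa m : m \in csa_masks E -> mask_set m \in A.
Proof. by move=> mhs; rewrite mem_csa_masks ?csa_masks_lt. Qed.

Lemma csa_mask_set J : J \in A -> exists2 m, m \in csa_masks E & J = mask_set m.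
Proof.
case: (mask_set_onto J) => m m16 -> JA; exists m => //.
by rewrite -mem_csa_masks.
Qed.

Variable pi : {set {set {set 'I_4}}}.
Hypothesis nice : nice_partition A pi.

Local Notation g m := (block_index pi (mask_set m)).

Lemma eq_block_index_mask a b : a \in csa_masks E -> b \in csa_masks E ->
  (g a == g b) = (pblock pi (mask_set a) == pblock pi (mask_set b)).
Proof. by move=> ahs bhs; apply: (eq_block_index nice); apply: mask_set_csa. Qed.

Lemma split_clause_holds a b : a \in csa_masks E -> b \in csa_masks E -> (a < b)%N ->
  has (lit_holds (fun m => g m)) (split_clause (csa_masks E) a b).
Proof.
move=> ahs bhs ab; rewrite /split_clause -cat1s has_cat has_seq1 lit_holdsE.
have [gab | //] := eqVneq (g a) (g b).
have [|||J [JA J_pencil] J_block] := nice_split nice (mask_set_csa ahs) (mask_set_csa bhs).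
- apply/eqP => /(congr1 mask_of); rewrite !mask_setK ?csa_masks_lt // => eab.
  by rewrite eab ltnn in ab.
- exact: csa_neq0 (mask_set_csa ahs).
- by apply/eqP; rewrite -eq_block_index_mask // gab.
case: (csa_mask_set JA) J_pencil J_block => j jhs -> J_pencil J_block.
apply/hasP; exists (false, j, a).
  apply/mapP; exists j => //; rewrite mem_filter jhs andbT.
  by apply/negP => /separatesP [v /andP [va vb]]; rewrite J_pencil.
by rewrite lit_holdsE eq_block_index_mask // (negbTE J_block).
Qed.

Lemma triple_clause_holds a b :
  a \in csa_masks E -> b \in csa_masks E -> (a + b)%N \in csa_masks E -> mask_add a b (a + b) ->
  has (lit_holds (fun m => g m)) (triple_clause a b).
Proof.
move=> ahs bhs abhs ab_add.
have := nice_dependent_triple nice (mask_set_csa ahs) (mask_set_csa bhs) (mask_set_csa abhs)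
  (form_mask_add ab_add).
by rewrite /triple_clause /= !lit_holdsE !eqb_id orbF !eq_block_index_mask.
Qed.

Lemma nice_labelling_exists :
  labelling_exists 4 (clauses (csa_masks E)) (csa_masks E).
Proof.
apply: (labelling_exists_complete (g := fun m => g m)); last first.
  by move=> m /mask_set_csa /(block_index_lt nice).
rewrite all_cat; apply/andP; split; apply/allP => _ /allpairsPdep [a [b [ahs b_in ->]]].
  by move: b_in; rewrite mem_filter => /andP [ab bhs]; apply: split_clause_holds.
move: b_in; rewrite mem_filter => /andP [/andP [/andP [_ abhs] ab_add] bhs].
exact: triple_clause_holds.
Qed.

End FourVertexGraph.

Lemma not_factored_four_vertex E :
  connectivity_decided E ->
  ~~ labelling_exists 4 (clauses (csa_masks E)) (csa_masks E) ->
  ~ factored (csa (@graph_of 4 E)).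
Proof.
move=> decided /negP no_labelling [pi nice].
exact: no_labelling (nice_labelling_exists decided nice).
Qed.

Theorem proposition8p8 :
  ~ factored (csa A32) /\ ~ factored (csa C4).
Proof. by split; apply: not_factored_four_vertex; vm_compute. Qed.
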